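(* Let $n=2k$ be a positive even integer, $\theta=\frac{2\pi}{n+2}$, and let $\mathcal{N}=\{(\ell_j,r_j): j\in[1:n]\}$ be given by $$\ell_{2i}=\ell_{2i-1}=\frac{2\sin\theta\,\sin(i\theta)}{\cos(i\theta)-\cos((i+1)\theta)},\qquad r_{2i}=r_{2i-1}=\frac{2\sin\theta\,\sin(i\theta)}{\cos((i-1)\theta)-\cos(i\theta)},\qquad i\in[1:k].$$ Then all $\ell_j,r_j$ are positive, $\ell_1\le\cdots\le\ell_n$, $r_1\ge\cdots\ge r_n$, $\mathsf{C}_1(\mathcal{N}_j)=1$ for every $j\in[1:n]$ (so $\mathsf{C}_1(\mathcal{N})=1$), and $\mathsf{C}_n(\mathcal{N})=2+2\cos\theta$. Consequently $\frac{\mathsf{C}_1(\mathcal{N})}{\mathsf{C}_n(\mathcal{N})}=\frac{1}{2+2\cos\left(\frac{2\pi}{n+2}\right)}$. Moreover, the rate $2+2\cos\theta$ is achieved by the schedule with $\lambda_{\{1,3,\dots,2k-1\}}=\lambda_{\{2,4,\dots,2k\}}=\frac12$ and $\lambda_{\mathcal{S}}=0$ otherwise.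
   Context: For a network $\mathcal{N}=\{(\ell_i,r_i): i\in[1:n]\}$ with nonnegative link capacities, with complements inside $[1:n]$ and maxima over empty sets equal to $0$, the approximate capacity is $\mathsf{C}_n(\mathcal{N})=\max_{\boldsymbol\lambda}\min_{\Omega\subseteq[1:n]}\sum_{\mathcal{S}\subseteq[1:n]}\lambda_{\mathcal{S}}\big(\max_{i\in\mathcal{S}^c\cap\Omega^c}\ell_i+\max_{i\in\mathcal{S}\cap\Omega}r_i\big)$, the maximum being over schedules $\boldsymbol\lambda=(\lambda_{\mathcal{S}})_{\mathcal{S}\subseteq[1:n]}$, $\lambda_{\mathcal{S}}\ge0$, $\sum_{\mathcal{S}}\lambda_{\mathcal{S}}=1$; the rate achieved by a fixed schedule is the inner minimum. $\mathsf{C}_1(\mathcal{N}_i)=\frac{\ell_ir_i}{\ell_i+r_i}$ and $\mathsf{C}_1(\mathcal{N})=\max_i\mathsf{C}_1(\mathcal{N}_i)$. *)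

From Stdlib Require Import Reals ClassicalEpsilon.
From mathcomp Require Import all_boot.
Set Implicit Arguments. Unset Strict Implicit. Unset Printing Implicit Defensive.
Local Open Scope R_scope.

(* Node j : 'I_n  stands for node j+1 of [1:n]. A network is given by the
   two capacity functions l r : 'I_n -> R. *)

Definition C1_link (l r : R) : R := (l * r / (l + r)).

Definition C1_net (n : nat) (l r : 'I_n -> R) : R :=
  \big[Rmax/0]_(i : 'I_n) C1_link (l i) (r i).

Definition is_schedule (n : nat) (lam : {set 'I_n} -> R) : Prop :=
  (forall S, 0 <= lam S) /\ \big[Rplus/0]_(S : {set 'I_n}) lam S = 1.

(* sum_S lambda_S ( max_{i in S^c cap Omega^c} l_i + max_{i in S cap Omega} r_i ),
   maxima over empty sets equal to 0, complements inside [1:n] *)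
Definition cut_value (n : nat) (l r : 'I_n -> R) (lam : {set 'I_n} -> R)
    (Om : {set 'I_n}) : R :=
  \big[Rplus/0]_(S : {set 'I_n})
     (lam S * (\big[Rmax/0]_(i in ~: S :&: ~: Om) l i
               + \big[Rmax/0]_(i in S :&: Om) r i)).

(* rate achieved by a fixed schedule: min over Omega (set0 is one of the
   Omegas, so starting the fold from its value gives exactly the minimum) *)
Definition rate (n : nat) (l r : 'I_n -> R) (lam : {set 'I_n} -> R) : R :=
  \big[Rmin/cut_value l r lam set0]_(Om : {set 'I_n}) cut_value l r lam Om.

Definition is_Cn (n : nat) (l r : 'I_n -> R) (c : R) : Prop :=
  (exists lam, is_schedule lam /\ rate l r lam = c) /\
  (forall lam, is_schedule lam -> (rate l r lam <= c)).

(* the approximate capacity C_n(N) (the maximum exists by compactness) *)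
Definition Cn_net (n : nat) (l r : 'I_n -> R) : R :=
  epsilon (inhabits 0) (is_Cn l r).

(* The network of the theorem, n = 2k, theta = 2 pi/(n+2);
   0-based node j corresponds to 1-based j+1, which is 2i-1 or 2i
   for i = j/2 + 1. *)
Definition theta (k : nat) : R := (2 * PI / INR (2 * k + 2)%N).

Definition ex_l (k : nat) (j : 'I_(2 * k)) : R :=
  let i := INR (j %/ 2 + 1)%N in let t := theta k in
  (2 * sin t * sin (i * t) / (cos (i * t) - cos ((i + 1) * t))).

Definition ex_r (k : nat) (j : 'I_(2 * k)) : R :=
  let i := INR (j %/ 2 + 1)%N in let t := theta k in
  (2 * sin t * sin (i * t) / (cos ((i - 1) * t) - cos (i * t))).

(* {1,3,...,2k-1} (0-based even nodes) and {2,4,...,2k} (0-based odd) *)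
Definition odd_nodes (k : nat) : {set 'I_(2 * k)} := [set j : 'I_(2 * k) | ~~ ssrnat.odd j].
Definition even_nodes (k : nat) : {set 'I_(2 * k)} := [set j : 'I_(2 * k) | ssrnat.odd j].

Definition alt_schedule (k : nat) (S : {set 'I_(2 * k)}) : R :=
  if S == odd_nodes k then (1/2)
  else if S == even_nodes k then (1/2) else 0.

(* Write l_i, r_i for the capacities at level i (nodes 2i-1 and 2i) and
   c = 2 + 2 cos theta.  Two trigonometric identities drive everything:
   l_i + r_i = l_i r_i, i.e. 1/l_i + 1/r_i = 1, which gives C_1(N_j) = 1 and,
   with a little algebra, the monotonicity; and l_i + r_{i+1} = c for
   0 <= i <= k, where the formulas give l_0 = r_{k+1} = 0 because
   sin 0 = sin ((k+1) theta) = 0.  The cut Omega = [1:n] bounds the rate of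
   every schedule by max_j r_j = r_1 = c.  For the alternating schedule, each
   parity class is a chain of levels 1..k; some level i in [0:k] has its node
   outside Omega (or i = 0) and the node at level i+1 inside Omega (or i = k),
   so the class contributes at least l_i + r_{i+1} = c to every cut. *)
From Stdlib Require Import Reals Lra Psatz ClassicalEpsilon.
From HB Require Import structures.
From mathcomp Require Import all_boot zify.
Set Implicit Arguments. Unset Strict Implicit. Unset Printing Implicit Defensive.
Local Open Scope R_scope.

HB.instance Definition _ := Monoid.isComLaw.Build R 0 Rplus
  (fun x y z => esym (Rplus_assoc x y z)) Rplus_comm Rplus_0_l.

Section BigR.
Variable I : finType.
Implicit Types (P : pred I) (F G : I -> R).

Lemma bigmaxR_ge0 P F : 0 <= \big[Rmax/0]_(i | P i) F i.
Proof. by elim/big_rec: _ => [|i x _ hx]; [lra | apply: Rle_trans hx (Rmax_r _ _)]. Qed.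

Lemma bigmaxR_ge P F a : P a -> F a <= \big[Rmax/0]_(i | P i) F i.
Proof.
move=> Pa; have : a \in index_enum I by rewrite mem_index_enum.
elim: (index_enum I) => [//|b s IH]; rewrite in_cons big_cons => /orP[/eqP<-|/IH h].
- by rewrite Pa; apply: Rmax_l.
- by case: (P b) => //; apply: Rle_trans h (Rmax_r _ _).
Qed.

Lemma bigmaxR_le P F c :
  0 <= c -> (forall i, P i -> F i <= c) -> \big[Rmax/0]_(i | P i) F i <= c.
Proof. by move=> c_ge0 F_le; apply: (big_ind (Rle^~ c)) => // x y; apply: Rmax_lub. Qed.

Lemma bigminR_le P F x0 a : P a -> \big[Rmin/x0]_(i | P i) F i <= F a.
Proof.
move=> Pa; have : a \in index_enum I by rewrite mem_index_enum.
elim: (index_enum I) => [//|b s IH]; rewrite in_cons big_cons => /orP[/eqP<-|/IH h].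
- by rewrite Pa; apply: Rmin_l.
- by case: (P b) => //; apply: Rle_trans (Rmin_r _ _) h.
Qed.

Lemma bigminR_ge P F x0 c :
  c <= x0 -> (forall i, P i -> c <= F i) -> c <= \big[Rmin/x0]_(i | P i) F i.
Proof. by move=> c_le F_ge; apply: (big_ind (Rle c)) => // x y; apply: Rmin_glb. Qed.

Lemma sumR_le F G :
  (forall i, F i <= G i) -> \big[Rplus/0]_i F i <= \big[Rplus/0]_i G i.
Proof. by move=> FG; apply: (big_ind2 Rle) => // *; lra. Qed.

Lemma sumR_mulr F c : \big[Rplus/0]_i (F i * c) = (\big[Rplus/0]_i F i) * c.
Proof.
by apply: (big_ind2 (fun x y => x = y * c)) => [|x1 x2 y1 y2 -> ->|];
  rewrite ?Rmult_0_l ?Rmult_plus_distr_r.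
Qed.

Lemma sumR_two F a b : a != b -> (forall i, i != a -> i != b -> F i = 0) ->
  \big[Rplus/0]_i F i = F a + F b.
Proof.
move=> neq_ab F0; rewrite (bigD1 a) //= (bigD1 b) /=; last by rewrite eq_sym.
by rewrite big1 ?Rplus_0_r // => i /andP[]; apply: F0.
Qed.

End BigR.

Lemma C1_link_eq1 x y : 0 < x -> 0 < y -> x + y = x * y -> C1_link x y = 1.
Proof. by move=> x_gt0 y_gt0 conj_xy; rewrite /C1_link -conj_xy; field; lra. Qed.

Section Capacities.
Variables (n : nat) (l r : 'I_n -> R).

Lemma C1_net_const v : (0 < n)%N -> 0 <= v ->
  (forall i, C1_link (l i) (r i) = v) -> C1_net l r = v.
Proof.
move=> n_gt0 v_ge0 C1v; rewrite /C1_net; under eq_bigr do rewrite C1v.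
apply: Rle_antisym; first by apply: bigmaxR_le => // i _; apply: Rle_refl.
exact: (bigmaxR_ge (fun=> v) (a := Ordinal n_gt0)).
Qed.

Lemma rate_le lam c : is_schedule lam -> 0 <= c -> (forall i, r i <= c) ->
  rate l r lam <= c.
Proof.
move=> [lam_ge0 lam_sum1] c_ge0 r_le; apply: (@Rle_trans _ (cut_value l r lam setT)).
  exact: bigminR_le.
apply: (@Rle_trans _ (\big[Rplus/0]_S (lam S * c))); last first.
  by rewrite sumR_mulr lam_sum1 Rmult_1_l; apply: Rle_refl.
apply: sumR_le => S; apply: Rmult_le_compat_l => //.
rewrite big_pred0 ?Rplus_0_l; last by move=> i; rewrite !inE andbF.
by apply: bigmaxR_le.
Qed.

Lemma Cn_netE c : is_Cn l r c -> Cn_net l r = c.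
Proof.
move=> Cc; have := epsilon_spec (inhabits 0) (is_Cn l r) (ex_intro _ c Cc).
rewrite -/(Cn_net l r); move: (Cn_net l r) => c' [[lam [lam_sched <-]] lam_max].
have [[lam0 [lam0_sched <-]] lam0_max] := Cc.
by apply: Rle_antisym; [apply: lam0_max | apply: lam_max].
Qed.

End Capacities.

(* [x + y = x * y] says [1/x + 1/y = 1]: x and y are Hölder conjugate. *)
Lemma holder_conj_gt1 x y : 0 < x -> 0 < y -> x + y = x * y -> 1 < x /\ 1 < y.
Proof. move=> x_gt0 y_gt0 conj_xy; split; nra. Qed.

Lemma holder_conj_le c x y : 0 <= c <= 4 -> 0 < x -> 0 < y -> x + y = x * y ->
  c - y <= x.
Proof.
move=> c_bd x_gt0 y_gt0 conj_xy; have [_ y_gt1] := holder_conj_gt1 x_gt0 y_gt0 conj_xy.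
have xy : (y - 1) * x = y by lra.
have sq : (y - 1) * (x - (c - y)) = (y - c / 2) ^ 2 + c * (4 - c) / 4.
  by rewrite Rmult_minus_distr_l xy; field.
suff : 0 <= x - (c - y) by lra.
apply: (Rmult_le_reg_l (y - 1)); first lra.
rewrite Rmult_0_r sq; have := pow2_ge_0 (y - c / 2).
have : 0 <= c * (4 - c) by apply: Rmult_le_pos; lra.
lra.
Qed.

Lemma holder_conj_antimono x1 y1 x2 y2 : 0 < x1 -> 0 < y1 -> 0 < x2 -> 0 < y2 ->
  x1 + y1 = x1 * y1 -> x2 + y2 = x2 * y2 -> x1 <= x2 -> y2 <= y1.
Proof.
move=> x1_gt0 y1_gt0 x2_gt0 y2_gt0 conj1 conj2 le_x.
have [x1_gt1 y1_gt1] := holder_conj_gt1 x1_gt0 y1_gt0 conj1.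
have [x2_gt1 _] := holder_conj_gt1 x2_gt0 y2_gt0 conj2.
apply: Rnot_lt_le => lt_y.
have : 0 < (y2 - y1) * (x2 - 1) by apply: Rmult_lt_0_compat; lra.
have : 0 <= (y1 - 1) * (x2 - x1) by apply: Rmult_le_pos; lra.
lra.
Qed.

Lemma discrete_ivt (Q : pred nat) m : ~~ Q 0%N -> Q m ->
  exists2 i, (i < m)%N & ~~ Q i && Q i.+1.
Proof.
elim: m => [/negbTE -> //|m IH] nQ0 Qm1.
case: (boolP (Q m)) => [/(IH nQ0) [i lt_im switch_i] | nQm].
  by exists i; rewrite // ltnS ltnW.
by exists m; rewrite ?ltnSn ?nQm.
Qed.

Section ChainCut.
Variables (I : finType) (lev : I -> nat) (a b : nat -> R) (k : nat) (c : R).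
Hypotheses (a0_le0 : a 0%N <= 0) (bk_le0 : b k.+1 <= 0).
Hypothesis ab_ge : forall i, (i <= k)%N -> c <= a i + b i.+1.

Lemma chain_cut_ge (X Om : {set I}) :
  (forall i, (0 < i <= k)%N -> exists2 j, j \in X & lev j = i) ->
  c <= \big[Rmax/0]_(j in X :&: ~: Om) a (lev j)
       + \big[Rmax/0]_(j in X :&: Om) b (lev j).
Proof.
move=> X_full.
pose Q i := (k < i)%N || (0 < i)%N && [exists j in X :&: Om, lev j == i].
have Qk1 : Q k.+1 by rewrite /Q ltnSn.
have [i lt_ik /andP[nQi Qi1]] := @discrete_ivt Q k.+1 isT Qk1.
have a_le : a i <= \big[Rmax/0]_(j in X :&: ~: Om) a (lev j).
  have [->|i_gt0] := posnP i; first exact: Rle_trans a0_le0 (bigmaxR_ge0 _ _).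
  have /X_full [j jX lev_j] : (0 < i <= k)%N by rewrite i_gt0 -ltnS.
  rewrite -lev_j; apply: bigmaxR_ge; rewrite !inE jX /=.
  apply: contra nQi => jOm; rewrite /Q i_gt0; apply/orP; right; apply/existsP; exists j.
  by rewrite !inE jX jOm lev_j eqxx.
have b_le : b i.+1 <= \big[Rmax/0]_(j in X :&: Om) b (lev j).
  case/orP: Qi1 => [le_ki | /andP[_ /existsP[j /andP[jXOm /eqP <-]]]].
    have -> : i = k by lia.
    exact: Rle_trans bk_le0 (bigmaxR_ge0 _ _).
  exact: bigmaxR_ge.
by have := ab_ge lt_ik; lra.
Qed.

End ChainCut.

Definition lcap (t x : R) : R :=
  2 * sin t * sin (x * t) / (cos (x * t) - cos ((x + 1) * t)).
Definition rcap (t x : R) : R :=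
  2 * sin t * sin (x * t) / (cos ((x - 1) * t) - cos (x * t)).

Lemma lcap0 t : lcap t 0 = 0.
Proof. by rewrite /lcap Rmult_0_l sin_0 Rmult_0_r /Rdiv Rmult_0_l. Qed.

Lemma cos_gaps_add t x :
  (cos ((x - 1) * t) - cos (x * t)) + (cos (x * t) - cos ((x + 1) * t))
  = 2 * sin t * sin (x * t).
Proof.
rewrite (_ : (x - 1) * t = x * t - t); last ring.
rewrite (_ : (x + 1) * t = x * t + t); last ring.
by rewrite cos_minus cos_plus; ring.
Qed.

Lemma lcap_add_rcap t x :
  cos (x * t) - cos ((x + 1) * t) <> 0 -> cos ((x - 1) * t) - cos (x * t) <> 0 ->
  lcap t x + rcap t x = lcap t x * rcap t x.
Proof. by move=> gap1 gap0; rewrite /lcap /rcap -cos_gaps_add; field. Qed.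

Lemma lcap_add_rcap_succ t x : cos (x * t) - cos ((x + 1) * t) <> 0 ->
  lcap t x + rcap t (x + 1) = 2 + 2 * cos t.
Proof.
move=> gap; rewrite /lcap /rcap (_ : (x + 1 - 1) * t = x * t); last ring.
rewrite -Rdiv_plus_distr; rewrite (_ : (x + 1) * t = x * t + t) in gap *; last ring.
rewrite sin_plus cos_plus; rewrite cos_plus in gap.
have num : 2 * sin t * sin (x * t) + 2 * sin t * (sin (x * t) * cos t + cos (x * t) * sin t)
  = (2 + 2 * cos t) * (cos (x * t) - (cos (x * t) * cos t - sin (x * t) * sin t))
    + 2 * cos (x * t) * (Rsqr (sin t) + Rsqr (cos t) - 1) by rewrite /Rsqr; ring.
by rewrite num sin2_cos2; field.
Qed.

Section Theta.
Variable k : nat.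
Hypothesis k_gt0 : (0 < k)%N.
Local Notation t := (theta k).
Local Notation c := (2 + 2 * cos (theta k)).

Lemma INR_k_ge1 : 1 <= INR k.
Proof. by apply: (le_INR 1); apply/leP. Qed.

Lemma succ_mul_theta : (INR k + 1) * t = PI.
Proof.
rewrite /theta (_ : INR (2 * k + 2) = 2 * (INR k + 1)).
  by field; have := INR_k_ge1; lra.
change (INR (Nat.add (Nat.mul 2 k) 2) = 2 * (INR k + 1)).
by rewrite plus_INR mult_INR /=; ring.
Qed.

Lemma theta_gt0 : 0 < t.
Proof.
have := succ_mul_theta; have := INR_k_ge1; have := PI_RGT_0.
move: t => t0; nra.
Qed.

Lemma cos_gap_gt0 x : 0 <= x -> x <= INR k -> 0 < cos (x * t) - cos ((x + 1) * t).
Proof.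
move=> x_ge0 x_le; have := succ_mul_theta; have := theta_gt0 => t_gt0 kt.
suff : cos ((x + 1) * t) < cos (x * t) by lra.
by apply: cos_decreasing_1; nra.
Qed.

Lemma sin_mul_theta_gt0 x : 0 < x -> x <= INR k -> 0 < sin (x * t).
Proof.
move=> x_gt0 x_le; have := succ_mul_theta; have := theta_gt0 => t_gt0 kt.
by apply: sin_gt_0; nra.
Qed.

Lemma sin_theta_gt0 : 0 < sin t.
Proof. by rewrite -[t]Rmult_1_l; apply: sin_mul_theta_gt0; have := INR_k_ge1; lra. Qed.

Lemma lcap_gt0 x : 0 < x -> x <= INR k -> 0 < lcap t x.
Proof.
move=> x_gt0 x_le; apply: Rdiv_lt_0_compat; last by apply: cos_gap_gt0; lra.
have := @sin_mul_theta_gt0 x x_gt0 x_le; have := sin_theta_gt0; nra.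
Qed.

Lemma rcap_gt0 x : 1 <= x -> x <= INR k -> 0 < rcap t x.
Proof.
move=> x_ge1 x_le; have x_gt0 : 0 < x by lra.
apply: Rdiv_lt_0_compat.
  by have := @sin_mul_theta_gt0 x x_gt0 x_le; have := sin_theta_gt0; nra.
have gap : 0 < cos ((x - 1) * t) - cos ((x - 1 + 1) * t) by apply: cos_gap_gt0; lra.
by rewrite (_ : x - 1 + 1 = x) in gap; [lra | ring].
Qed.

Lemma lcap_ge0 x : 0 <= x -> x <= INR k -> 0 <= lcap t x.
Proof.
move=> x_ge0 x_le; case: (Rle_lt_or_eq_dec _ _ x_ge0) => [x_gt0 | <-].
  exact/Rlt_le/lcap_gt0.
by rewrite lcap0; apply: Rle_refl.
Qed.

Lemma lcap_add_rcap_theta x : 1 <= x -> x <= INR k ->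
  lcap t x + rcap t x = lcap t x * rcap t x.
Proof.
move=> x_ge1 x_le; apply: lcap_add_rcap.
  by have := @cos_gap_gt0 x; lra.
have gap : 0 < cos ((x - 1) * t) - cos ((x - 1 + 1) * t) by apply: cos_gap_gt0; lra.
by rewrite (_ : x - 1 + 1 = x) in gap; [lra | ring].
Qed.

Lemma lcap_add_rcap_succ_theta x : 0 <= x -> x <= INR k ->
  lcap t x + rcap t (x + 1) = c.
Proof. by move=> x_ge0 x_le; apply: lcap_add_rcap_succ; have := cos_gap_gt0 x_ge0 x_le; lra. Qed.

Lemma rcap_succ_k : rcap t (INR k + 1) = 0.
Proof. by rewrite /rcap succ_mul_theta sin_PI Rmult_0_r /Rdiv Rmult_0_l. Qed.

Lemma cos_theta_bounds : 0 <= c <= 4.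
Proof. by have := COS_bound t; lra. Qed.

Lemma rcap_le x : 1 <= x -> x <= INR k -> rcap t x <= c.
Proof.
move=> x_ge1 x_le; have l_ge0 : 0 <= lcap t (x - 1) by apply: lcap_ge0; lra.
have sum_c : lcap t (x - 1) + rcap t (x - 1 + 1) = c.
  by apply: lcap_add_rcap_succ_theta; lra.
by rewrite (_ : x - 1 + 1 = x) in sum_c; [lra | ring].
Qed.

Lemma lcap_le_succ x : 0 <= x -> x + 1 <= INR k -> lcap t x <= lcap t (x + 1).
Proof.
move=> x_ge0 x_le; have x_le' : x <= INR k by lra.
have := lcap_add_rcap_succ_theta x_ge0 x_le'.
suff : c - rcap t (x + 1) <= lcap t (x + 1) by lra.
apply: holder_conj_le; [exact: cos_theta_bounds | apply: lcap_gt0 | apply: rcap_gt0 |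
  apply: lcap_add_rcap_theta]; lra.
Qed.

Lemma lcap_homo i j : (0 < i)%N -> (i <= j)%N -> (j <= k)%N ->
  lcap t (INR i) <= lcap t (INR j).
Proof.
move=> i_gt0 le_ij j_le.
pose D := [pred m | (0 < m <= k)%N].
apply: (@homo_leq_in _ D (fun m => lcap t (INR m)) Rle) => //.
- exact: Rle_refl.
- by move=> y x z; apply: Rle_trans.
- by move=> m1 m2 /andP[? ?] /andP[? ?] m /andP[? ?]; rewrite inE; apply/andP; split; lia.
- move=> m; rewrite !inE => /andP[m_gt0 _] /andP[_ m1_le].
  rewrite S_INR; apply: lcap_le_succ; first exact: pos_INR.
  by rewrite -S_INR; apply: le_INR; apply/leP.
- by rewrite inE i_gt0; lia.
- by rewrite inE; lia.
Qed.

End Theta.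

Definition level (j : nat) : nat := (j %/ 2 + 1)%N.

Lemma level_parity_surj k (p : bool) i : (0 < i <= k)%N ->
  exists2 j : 'I_(2 * k), odd j = p & level j = i.
Proof.
move=> i_bd; have lt_j : (2 * i.-1 + p < 2 * k)%N by case: p; lia.
exists (Ordinal lt_j); rewrite /= ?/level; clear lt_j; first by rewrite oddD oddM; case: p.
by case: p; lia.
Qed.

Section Network.
Variable k : nat.
Hypothesis k_gt0 : (0 < k)%N.
Local Notation t := (theta k).
Local Notation c := (2 + 2 * cos (theta k)).

Lemma ex_lE (j : 'I_(2 * k)) : ex_l j = lcap t (INR (level j)).
Proof. by []. Qed.

Lemma ex_rE (j : 'I_(2 * k)) : ex_r j = rcap t (INR (level j)).
Proof. by []. Qed.

Lemma level_bounds (j : 'I_(2 * k)) : 1 <= INR (level j) <= INR k.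
Proof.
have := ltn_ord j; rewrite /level => lt_j.
by split; [apply: (le_INR 1) | apply: le_INR]; apply/leP; lia.
Qed.

Lemma ex_lr_gt0 (j : 'I_(2 * k)) : 0 < ex_l j /\ 0 < ex_r j.
Proof.
have [? ?] := level_bounds j; rewrite ex_lE ex_rE.
by split; [apply: (lcap_gt0 k_gt0) | apply: (rcap_gt0 k_gt0)]; lra.
Qed.

Lemma ex_holder_conj (j : 'I_(2 * k)) : ex_l j + ex_r j = ex_l j * ex_r j.
Proof. by have [? ?] := level_bounds j; apply: (lcap_add_rcap_theta k_gt0). Qed.

Lemma ex_C1_link (j : 'I_(2 * k)) : C1_link (ex_l j) (ex_r j) = 1.
Proof. by have [? ?] := ex_lr_gt0 j; apply: C1_link_eq1 (ex_holder_conj j). Qed.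

Lemma ex_mono (j1 j2 : 'I_(2 * k)) : (j1 <= j2)%N ->
  ex_l j1 <= ex_l j2 /\ ex_r j2 <= ex_r j1.
Proof.
move=> le_j; have l_le : ex_l j1 <= ex_l j2.
  by rewrite !ex_lE; apply: (lcap_homo k_gt0); rewrite /level; have := ltn_ord j2; lia.
split => //; have [? ?] := ex_lr_gt0 j1; have [? ?] := ex_lr_gt0 j2.
exact: holder_conj_antimono (ex_holder_conj j1) (ex_holder_conj j2) l_le.
Qed.

Lemma ex_r_le (j : 'I_(2 * k)) : ex_r j <= c.
Proof. by have [? ?] := level_bounds j; apply: (rcap_le k_gt0). Qed.

Lemma class_cut_ge (X Om : {set 'I_(2 * k)}) :
  (forall i, (0 < i <= k)%N -> exists2 j, j \in X & level j = i) ->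
  c <= \big[Rmax/0]_(j in X :&: ~: Om) ex_l j + \big[Rmax/0]_(j in X :&: Om) ex_r j.
Proof.
apply: (@chain_cut_ge _ (fun j : 'I_(2 * k) => level j)
  (fun i => lcap t (INR i)) (fun i => rcap t (INR i))).
- by rewrite /= lcap0; apply: Rle_refl.
- by rewrite S_INR (rcap_succ_k k_gt0); apply: Rle_refl.
- move=> i le_ik; rewrite S_INR (lcap_add_rcap_succ_theta k_gt0); first exact: Rle_refl.
    exact: pos_INR.
  by apply: le_INR; apply/leP.
Qed.

Lemma rate_ex_le lam : is_schedule lam -> rate (@ex_l k) (@ex_r k) lam <= c.
Proof.
move=> lam_sched; apply: rate_le lam_sched _ ex_r_le; have := @cos_theta_bounds k; lra.
Qed.

End Network.

Section AlternatingSchedule.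
Variable k : nat.
Hypothesis k_gt0 : (0 < k)%N.
Local Notation c := (2 + 2 * cos (theta k)).

Lemma odd_nodes_neq_even : odd_nodes k != even_nodes k.
Proof.
have n_gt0 : (0 < 2 * k)%N by rewrite muln_gt0.
by apply/eqP => /setP /(_ (Ordinal n_gt0)); rewrite !inE.
Qed.

Lemma setC_odd_nodes : ~: odd_nodes k = even_nodes k.
Proof. by apply/setP => j; rewrite !inE negbK. Qed.

Lemma setC_even_nodes : ~: even_nodes k = odd_nodes k.
Proof. by rewrite -setC_odd_nodes setCK. Qed.

Lemma alt_schedule_sum (F : {set 'I_(2 * k)} -> R) :
  \big[Rplus/0]_S (alt_schedule S * F S)
  = 1 / 2 * F (odd_nodes k) + 1 / 2 * F (even_nodes k).
Proof.
have neq := odd_nodes_neq_even.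
rewrite (sumR_two neq) /alt_schedule; last first.
  by move=> S S_odd S_even; rewrite (negbTE S_odd) (negbTE S_even) Rmult_0_l.
by rewrite eqxx eq_sym (negbTE neq) eqxx.
Qed.

Lemma alt_schedule_is_schedule : is_schedule (@alt_schedule k).
Proof.
split=> [S|]; first by rewrite /alt_schedule; do 2?case: ifP => _; lra.
rewrite -(eq_bigr _ (fun S _ => Rmult_1_r (alt_schedule S))).
by rewrite (alt_schedule_sum (fun=> 1)); lra.
Qed.

Lemma alt_cut_ge Om : c <= cut_value (@ex_l k) (@ex_r k) (@alt_schedule k) Om.
Proof.
rewrite /cut_value alt_schedule_sum setC_odd_nodes setC_even_nodes.
have odd_full i : (0 < i <= k)%N -> exists2 j, j \in odd_nodes k & level j = i.
  by move/(@level_parity_surj k false) => [j j_p lev_j]; exists j; rewrite ?inE ?j_p.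
have even_full i : (0 < i <= k)%N -> exists2 j, j \in even_nodes k & level j = i.
  by move/(@level_parity_surj k true) => [j j_p lev_j]; exists j; rewrite ?inE ?j_p.
have := class_cut_ge k_gt0 Om odd_full; have := class_cut_ge k_gt0 Om even_full.
lra.
Qed.

Lemma rate_alt_schedule : rate (@ex_l k) (@ex_r k) (@alt_schedule k) = c.
Proof.
apply: Rle_antisym; first exact: rate_ex_le k_gt0 _ alt_schedule_is_schedule.
by apply: bigminR_ge => [|Om _]; apply: alt_cut_ge.
Qed.

Lemma is_Cn_ex : is_Cn (@ex_l k) (@ex_r k) c.
Proof.
split; last exact: rate_ex_le.
by exists (@alt_schedule k); split; [apply: alt_schedule_is_schedule | apply: rate_alt_schedule].
Qed.

End AlternatingSchedule.

Theorem mainTheorem6 (k : nat) (hk : (0 < k)%N) :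
  (forall j : 'I_(2 * k), 0 < ex_l j /\ 0 < ex_r j) /\
  (forall j1 j2 : 'I_(2 * k), (j1 <= j2)%N ->
      ex_l j1 <= ex_l j2 /\ ex_r j2 <= ex_r j1) /\
  (forall j : 'I_(2 * k), C1_link (ex_l j) (ex_r j) = 1) /\
  C1_net (@ex_l k) (@ex_r k) = 1 /\
  Cn_net (@ex_l k) (@ex_r k) = 2 + 2 * cos (theta k) /\
  C1_net (@ex_l k) (@ex_r k) / Cn_net (@ex_l k) (@ex_r k)
     = 1 / (2 + 2 * cos (2 * PI / INR (2 * k + 2)%N)) /\
  is_schedule (@alt_schedule k) /\
  rate (@ex_l k) (@ex_r k) (@alt_schedule k) = 2 + 2 * cos (theta k).
Proof.
have n_gt0 : (0 < 2 * k)%N by rewrite muln_gt0.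
have C1_1 : C1_net (@ex_l k) (@ex_r k) = 1.
  by apply: C1_net_const n_gt0 _ (ex_C1_link hk); lra.
have Cn_c := Cn_netE (is_Cn_ex hk).
split; first exact: ex_lr_gt0 hk.
split; first exact: ex_mono hk.
split; first exact: ex_C1_link hk.
split; first exact: C1_1.
split; first exact: Cn_c.
split; first by rewrite C1_1 Cn_c.
split; first exact: alt_schedule_is_schedule hk.
exact: rate_alt_schedule hk.
Qed.
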